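(* Let $X$ be a projective irreducible symplectic variety with Beauville--Bogomolov--Fujiki form $q$ integral on $L:=H^2(X,\mathbb Z)$, and let $E$ be a prime exceptional divisor on $X$. Assume that (a) the linear form $-\frac{2q(E,\cdot)}{q(E)}$ on $L$ takes integer values (i.e. the class $-2E^\vee/q(E)$ is integral), and (b) either $E$ or $E/2$ is a primitive element of $L$. Then $|q(E)|\le 4\,\mathrm{Card}(A_X)$. In particular this holds for every prime exceptional divisor on a projective irreducible symplectic manifold $X$.
   Context: A (possibly singular) irreducible symplectic variety is a normal compact K\''ahler variety with canonical singularities and a symplectic reflexive $2$-form $\sigma$ such that for every quasi-\'etale $f:X'\to X$, $f^{[*]}\sigma$ generates the algebra of reflexive forms on $X'$; in the smooth case this is a simply connected compact K\''ahler manifold with $H^0(\Omega^2)=\mathbb C\sigma$, $\sigma$ symplectic. $q$ is the Beauville--Bogomolov--Fujiki form, scaled to be integral (non-degenerate) on $L=H^2(X,\mathbb Z)$; $A_X:=L^\vee/L$, with $L\hookrightarrow L^\vee$, $t\mapsto q(t,\cdot)$, is the finite discriminant group. A prime exceptional divisor is a prime divisor $E$ with $q(E)<0$. For smooth projective $X$, hypotheses (a) and (b) are known (Druel, Markman). *)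

(* The lattice-theoretic core of the statement:
   L = H^2(X,Z) is modelled as Z^n = 'rV[int]_n with the (integral,
   symmetric, non-degenerate) BBF form given by its Gram matrix Q. *)
From HB Require Import structures.
From mathcomp Require Import all_boot all_order all_algebra.
Set Implicit Arguments. Unset Strict Implicit. Unset Printing Implicit Defensive.
Import Order.TTheory GRing.Theory Num.Theory.
Local Open Scope ring_scope.

Definition bform (n : nat) (Q : 'M[int]_n) (x y : 'rV[int]_n) : int :=
  (x *m Q *m y^T) 0 0.

Definition sym_nondeg (n : nat) (Q : 'M[int]_n) : Prop :=
  Q^T = Q /\ forall x : 'rV[int]_n, (forall y, bform Q x y = 0) -> x = 0.

Definition primitive (n : nat) (v : 'rV[int]_n) : Prop :=
  v != 0 /\ forall (k : int) (w : 'rV[int]_n), v = k *: w -> k = 1 \/ k = -1.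

(* L^vee = Hom(L,Z) is identified with 'rV[int]_n via the dual basis;
   the embedding L -> L^vee, t |-> q(t,.) is t |-> t *m Q.
   [discr_card Q m] : the discriminant group A_X = L^vee / L has exactly
   m elements (witnessed by a surjection onto 'I_m whose fibres are
   exactly the cosets of L in L^vee). *)
Definition discr_card (n : nat) (Q : 'M[int]_n) (m : nat) : Prop :=
  exists f : 'rV[int]_n -> 'I_m,
    (forall i : 'I_m, exists y, f y = i) /\
    (forall y1 y2 : 'rV[int]_n, f y1 = f y2 <-> exists t, y1 - y2 = t *m Q).

From HB Require Import structures.
From mathcomp Require Import all_boot all_order all_algebra.
From mathcomp Require Import ring zify.
Import Order.TTheory GRing.Theory Num.Theory.
Set Implicit Arguments. Unset Strict Implicit. Unset Printing Implicit Defensive.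
Local Open Scope ring_scope.

(* Put [D := q(E)] and let [w := 2 E^vee / D] in [L^vee], i.e. [D w = 2 q(E, .)].
   If [k w] lies in [L], say [k w = q(t, .)], non-degeneracy gives [2 k E = D t],
   and primitivity of [E] (resp. of [E/2]) forces [D] to divide [4 k].  Hence the
   classes of [k w] for [0 <= k < |D|/4] are pairwise distinct in [A_X], so
   [|D|/4 <= Card A_X]. *)

Lemma primitive_dvd_scale (n : nat) (v t : 'rV[int]_n) (c d : int) :
  primitive v -> d != 0 -> c *: v = d *: t -> (d %| c)%Z.
Proof.
move=> [_ primv] d0 cvdt.
have [u [u' Bezout]] := Bezoutz c d.
have g0 : gcdz c d != 0 by rewrite gcdz_eq0 negb_and d0 orbT.
have dgK := divzK (dvdz_gcdr c d).
(* [v = (d / g) (u t + u' v)] with [g = gcd(c, d)], so [d / g] is a unit. *)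
have : v = (d %/ gcdz c d)%Z *: (u *: t + u' *: v).
  apply/matrixP => i j; apply: (mulIf g0); rewrite !mxE.
  have cvdt_ij : c * v i j = d * t i j by move/matrixP: cvdt => /(_ i j); rewrite !mxE.
  rewrite mulrAC dgK -Bezout.
  have -> : v i j * (u * c + u' * d) = u * (c * v i j) + u' * d * v i j by ring.
  by rewrite cvdt_ij; ring.
move/primv => [dg1|dgN1]; rewrite -dgK.
  by rewrite dg1 mul1r dvdz_gcdl.
by rewrite dgN1 mulN1r dvdzE abszN -dvdzE dvdz_gcdl.
Qed.

Lemma bformZl (n : nat) (Q : 'M[int]_n) (a : int) (x y : 'rV[int]_n) :
  bform Q (a *: x) y = a * bform Q x y.
Proof. by rewrite /bform -!scalemxAl mxE. Qed.

Lemma bform_delta_mx (n : nat) (Q : 'M[int]_n) (x : 'rV[int]_n) (j : 'I_n) :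
  bform Q x (delta_mx ord0 j) = (x *m Q) ord0 j.
Proof. by rewrite /bform trmx_delta -colE mxE. Qed.

Lemma nondeg_mulmx_eq0 (n : nat) (Q : 'M[int]_n) (x : 'rV[int]_n) :
  sym_nondeg Q -> x *m Q = 0 -> x = 0.
Proof. by move=> [_ nondeg] xQ0; apply: nondeg => y; rewrite /bform xQ0 mul0mx mxE. Qed.

Lemma dual_divisible (n : nat) (Q : 'M[int]_n) (u : 'rV[int]_n) (d : int) :
  (forall x, (d %| bform Q u x)%Z) -> exists w : 'rV[int]_n, d *: w = u *m Q.
Proof.
move=> dvd_u; exists (\row_j ((u *m Q) ord0 j %/ d)%Z).
apply/matrixP => i j; rewrite [i]ord1 [LHS]mxE [X in d * X]mxE.
by rewrite mulrC divzK // -bform_delta_mx.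
Qed.

Lemma multiple_in_lattice_dvd (n : nat) (Q : 'M[int]_n) (E w t : 'rV[int]_n)
    (d k : int) :
  sym_nondeg Q -> d != 0 ->
  (primitive E \/ exists e : 'rV[int]_n, E = 2%:Z *: e /\ primitive e) ->
  d *: w = 2 *: (E *m Q) -> k *: w = t *m Q -> (d %| 4 * k)%Z.
Proof.
move=> symQ d0 primE dw kw.
have kE : (2 * k) *: E = d *: t.
  apply/eqP; rewrite -subr_eq0; apply/eqP; apply: (nondeg_mulmx_eq0 symQ).
  rewrite mulmxBl -!scalemxAl -kw scalerA (mulrC d) -(scalerA k d) dw.
  by rewrite scalerA (mulrC k) subrr.
case: primE => [primE | [e [E2e prim_e]]].
  by rewrite (_ : 4 = 2 * 2) // -mulrA dvdz_mull // (primitive_dvd_scale primE d0 kE).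
by apply: (primitive_dvd_scale (t := t) prim_e d0); rewrite -kE E2e scalerA mulrAC.
Qed.

Lemma order_le_discr_card (n : nat) (Q : 'M[int]_n) (m N : nat) (w : 'rV[int]_n) :
  discr_card Q m ->
  (forall (k : nat) (t : 'rV[int]_n), (0 < k < N)%N -> k%:Z *: w != t *m Q) ->
  (N <= m)%N.
Proof.
move=> [f [_ fibres]] w_order.
pose g (i : 'I_N) : 'I_m := f ((i : nat)%:Z *: w).
suff /leq_card : injective g by rewrite !card_ord.
have sub_scale (i j : nat) : (j <= i)%N -> i%:Z *: w - j%:Z *: w = (i - j)%N%:Z *: w.
  by move=> ji; rewrite -scalerBl subzn.
suff eq_of_le (i j : 'I_N) : g i = g j -> (j <= i)%N -> i = j.
  by move=> i j gij; case: (leqP j i) => [/(eq_of_le _ _ gij) | /ltnW /(eq_of_le _ _ (esym gij))->].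
move=> gij ji; apply/val_inj/eqP; rewrite eqn_leq ji andbT leqNgt; apply/negP => ij.
have [t Dt] := (fibres _ _).1 gij.
suff /(w_order (i - j)%N t) : (0 < i - j < N)%N by rewrite -sub_scale // Dt eqxx.
by rewrite subn_gt0 ij /= (leq_ltn_trans (leq_subr _ _) (ltn_ord i)).
Qed.

Theorem proposition4 (n : nat) (Q : 'M[int]_n) (m : nat) (E : 'rV[int]_n) :
  sym_nondeg Q ->
  discr_card Q m ->
  bform Q E E < 0 ->
  (forall x : 'rV[int]_n, (bform Q E E %| 2 * bform Q E x)%Z) ->
  (primitive E \/ exists e : 'rV[int]_n, E = 2%:Z *: e /\ primitive e) ->
  `|bform Q E E| <= 4 * m%:Z.
Proof.
move=> symQ cardA qE_lt0 qE_dvd primE.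
set D := bform Q E E in qE_lt0 qE_dvd *.
have D0 : D != 0 by rewrite ltr0_neq0.
have [w Dw] : exists w, D *: w = (2 *: E) *m Q.
  by apply: dual_divisible => x; rewrite bformZl.
rewrite -scalemxAl in Dw.
have : ((`|D|%N + 3) %/ 4 <= m)%N.
  apply: (order_le_discr_card cardA) => k t /andP[k_gt0 k_lt]; apply/eqP => kw.
  have := multiple_in_lattice_dvd symQ D0 primE Dw kw.
  rewrite dvdzE abszM /= => /dvdn_leq; rewrite muln_gt0 k_gt0 => /(_ isT).
  lia.
by rewrite -abszE -[4]/(4%N%:Z) -PoszM lez_nat; lia.
Qed.
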